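(* Let $k\ge2$, let $\mathcal{F}\subset 2^{[n]}$ be weakly $k$-cross-free, and let $0\le a\le b\le\log n$ be reals. For each integer $i$ with $a<i\le b$ let $\Gamma_i$ be a collection of pairwise disjoint nonempty chains contained in $\mathcal{F}_i$ such that $\{\max\mathcal{C}:\mathcal{C}\in\Gamma_i\}$ is an antichain, and let $\Gamma_{a,b}=\bigcup_{a<i\le b}\Gamma_i$. For each $\mathcal{C}\in\Gamma_{a,b}$ fix a set $Y(\mathcal{C})$ as described in the context, and for $y\in[n]$ let $d(y)$ be the number of chains $\mathcal{C}\in\Gamma_{a,b}$ with $y\in Y(\mathcal{C})$ and $g(y)$ the number of $k$-tuples of chains in $\Gamma_{a,b}$ that are good for $y$. Then for every $y\in[n]$, $$g(y)\geq \binom{d(y)/(k-1)^{2}}{k}.$$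
   Context: Sets $A,B$ are weakly crossing if $A\setminus B$, $B\setminus A$, $A\cap B$ are all non-empty; a family is weakly $k$-cross-free if it contains no $k$ pairwise weakly crossing sets. $\mathcal{F}_i=\{X\in\mathcal{F}:2^i<|X|\le 2^{i+1}\}$. A chain $\mathcal{C}$ is written $\mathcal{C}(1)\subsetneq\dots\subsetneq\mathcal{C}(l)$, $\min\mathcal{C}=\mathcal{C}(1)$, $\max\mathcal{C}=\mathcal{C}(l)$. $Y(\mathcal{C})$ is a set obtained by choosing one element of $\mathcal{C}(1)$ and one element of each difference $\mathcal{C}(j+1)\setminus\mathcal{C}(j)$, $j=1,\dots,l-1$ (so $|Y(\mathcal{C})|=|\mathcal{C}|$). A $k$-tuple $(\mathcal{C}_1,\dots,\mathcal{C}_k)$ of chains in $\Gamma_{a,b}$ with $\mathcal{C}_l\in\Gamma_{j_l}$ for some $j_1<\dots<j_k$ is good for $y$ if (i) $y\in Y(\mathcal{C}_l)$ for all $l\in[k]$, and (ii) letting $C_l$ be the smallest set of $\mathcal{C}_l$ containing $y$, we have $C_1\subset\dots\subset C_k$. Extended binomial coefficient: for real $x$, $\binom{x}{k}=x(x-1)\cdots(x-k+1)/k!$ if $x\ge k-1$ and $0$ otherwise. *)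

From Stdlib Require Import Rdefinitions Raxioms RIneq Rpower Classical ClassicalDescription.
From HB Require Import structures.
From mathcomp Require Import all_boot all_order all_algebra.
Set Implicit Arguments. Unset Strict Implicit. Unset Printing Implicit Defensive.
Import Order.TTheory GRing.Theory Num.Theory.

Definition pbool (P : Prop) : bool :=
  if excluded_middle_informative P then true else false.

Section Defs.
Variable n : nat.
Notation fam := {set {set 'I_n}}.

Definition wcross (A B : {set 'I_n}) : Prop :=
  A :\: B != set0 /\ B :\: A != set0 /\ A :&: B != set0.

Definition weakly_k_cross_free (k : nat) (F : fam) : Prop :=
  forall S : fam, S \subset F -> #|S| = k ->
    ~ (forall A B, A \in S -> B \in S -> A != B -> wcross A B).

Definition level (F : fam) (i : nat) : fam :=
  [set X in F | (2 ^ i < #|X|) && (#|X| <= 2 ^ i.+1)].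

Definition is_chain (C : fam) : Prop :=
  forall X Y, X \in C -> Y \in C -> (X \subset Y) || (Y \subset X).

(* max of a nonempty finite chain = union of its members *)
Definition chain_max (C : fam) : {set 'I_n} := \bigcup_(X in C) X.

(* smallest member of the chain C containing y (intersection of those) *)
Definition chain_min_cont (C : fam) (y : 'I_n) : {set 'I_n} :=
  \bigcap_(X in C | y \in X) X.

(* Y is obtained from the chain C(1) < ... < C(l) by choosing one element of
   C(1) and one element of each C(j+1) \ C(j) : i.e. Y lies in max C and meets
   each "layer" X \ (union of members strictly below X) in exactly one point. *)
Definition Y_of_chain (C : fam) (Y : {set 'I_n}) : Prop :=
  Y \subset chain_max C /\
  forall X, X \in C ->
    #|Y :&: (X :\: \bigcup_(Z in C | Z \proper X) Z)| = 1%N.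

Definition ext_binom (x : rat) (k : nat) : rat :=
  (if (k.-1)%:R <= x then (\prod_(i < k) (x - i%:R)) / (k`!)%:R else 0)%R.

End Defs.

From Stdlib Require Import Rdefinitions Raxioms RIneq Rpower ClassicalDescription Lia.
From HB Require Import structures.
From mathcomp Require Import all_boot all_order all_algebra zify.
Import Order.TTheory GRing.Theory Num.Theory.
Set Implicit Arguments. Unset Strict Implicit. Unset Printing Implicit Defensive.

(* Let D be the set of chains of Gamma_{a,b} whose set Y contains y, so that d(y) = |D|,
   and order D by letting C precede C' when C lies on a lower level than C' and the
   smallest member of C containing y is contained in the smallest member of C' containing y.
   Sets through the common point y that are pairwise incomparable cross weakly, so fewer
   than k of them lie in F.  On one level, the maxima of chains in D are such sets (the
   chains are disjoint and their maxima form an antichain); across the levels met by an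
   antichain of D, the smallest members through y are such sets (an inclusion would be a
   precedence, or would contradict the sizes of the levels).  Hence every antichain of D
   has at most (k-1)^2 elements, Mirsky's theorem yields a chain of length at least
   d(y)/(k-1)^2, and each k-element subchain, listed increasingly, is good for y. *)

Lemma pboolP (P : Prop) : reflect P (pbool P).
Proof. by rewrite /pbool; case: excluded_middle_informative => h; constructor. Qed.

Section Chains.
Variable n : nat.
Implicit Types (C : {set {set 'I_n}}) (X Z : {set 'I_n}).

Lemma chain_max_mem C : is_chain C -> C != set0 -> chain_max C \in C.
Proof.
move=> chC /set0Pn [X0 X0C].
have [X XC Xmax] := arg_maxnP (fun X => #|X|) (X0C : [pred X | X \in C] X0).
suff -> : chain_max C = X by [].
apply/eqP; rewrite eqEsubset (bigcup_sup X XC) andbT.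
apply/bigcupsP => Z ZC; case/orP: (chC X Z XC ZC) => // XZ.
by have /eqP <- : X == Z by rewrite eqEcard XZ; apply: Xmax.
Qed.

Lemma chain_min_cont_mem C y : is_chain C -> y \in chain_max C ->
  chain_min_cont C y \in C /\ y \in chain_min_cont C y.
Proof.
move=> chC /bigcupP [X0 X0C yX0].
have X0P : [pred X | (X \in C) && (y \in X)] X0 by rewrite /= X0C.
have [X /andP [XC yX] Xmin] := arg_minnP (fun X => #|X|) X0P.
suff -> : chain_min_cont C y = X by [].
apply/eqP; rewrite eqEsubset (bigcap_inf X) ?XC //=.
apply/bigcapsP => Z /andP [ZC yZ]; case/orP: (chC X Z XC ZC) => // ZX.
by have /eqP -> : Z == X by rewrite eqEcard ZX; apply: Xmin; rewrite /= ZC.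
Qed.

End Chains.

Lemma weakly_cross_free_antichain n k (F : {set {set 'I_n}}) (y : 'I_n)
    (T : finType) (A : {set T}) (f : T -> {set 'I_n}) :
  weakly_k_cross_free k F ->
  (forall x, x \in A -> f x \in F /\ y \in f x) ->
  {in A &, forall x x', x != x' -> ~~ (f x \subset f x')} ->
  (#|A| < k)%N.
Proof.
move=> crossF fA incomp; rewrite ltnNge.
apply/negP => /card_geqP [s [uniq_s size_s sA]].
have inj_f : {in [set x in s] &, injective f}.
  move=> x x'; rewrite !inE => xs x's fxx'; apply/eqP; apply: contraTT (subxx (f x)) => ne.
  by rewrite {2}fxx' incomp ?sA.
apply: (crossF (f @: [set x in s])).
- by apply/subsetP => Z /imsetP [x]; rewrite inE => xs ->; exact: (fA x (sA _ xs)).1.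
- by rewrite card_in_imset // cardsE (card_uniqP uniq_s).
move=> X Z /imsetP [x]; rewrite inE => xs -> /imsetP [x']; rewrite inE => x's -> ne.
have nxx' : x != x' by apply: contraNneq ne => ->.
split; [|split].
- by rewrite setD_eq0 incomp ?sA.
- by rewrite setD_eq0 incomp ?sA // eq_sym.
- by apply/set0Pn; exists y; rewrite inE (fA x (sA _ xs)).2 (fA x' (sA _ x's)).2.
Qed.

(* The index [i] of the level [F_i] of a set of size [m], i.e. [2 ^ i < m <= 2 ^ i.+1]. *)
Definition level_of (m : nat) : nat := trunc_log 2 m.-1.

Definition chain_level n (C : {set {set 'I_n}}) : nat := level_of #|chain_max C|.

Section Levels.
Variables (n : nat) (F : {set {set 'I_n}}).

Lemma mem_levelP i X :
  X \in level F i -> [/\ X \in F, (2 ^ i < #|X|)%N & (#|X| <= 2 ^ i.+1)%N].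
Proof. by rewrite inE => /andP [-> /andP [-> ->]]. Qed.

Lemma level_ofE i X : X \in level F i -> level_of #|X| = i.
Proof.
case/mem_levelP => _ lo hi; apply: trunc_log_eq => //.
by move: lo hi; set e := 2 ^ i; set e' := 2 ^ i.+1; lia.
Qed.

Lemma level_card_lt i j X Z :
  X \in level F i -> Z \in level F j -> (j < i)%N -> (#|Z| < #|X|)%N.
Proof.
case/mem_levelP => _ Xlo _ /mem_levelP [_ _ Zhi] ji.
by apply: leq_ltn_trans Zhi (leq_ltn_trans _ Xlo); rewrite leq_exp2l.
Qed.

End Levels.

Section ExtBinom.
Local Open Scope ring_scope.

Lemma ext_binom_le_binomial (k m : nat) (x : rat) :
  x <= m%:R -> ext_binom x k <= ('C(m, k))%:R.
Proof.
move=> xm; rewrite /ext_binom; case: ifP => kx; last by rewrite ler0n.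
have km : (k.-1 <= m)%N by rewrite -(ler_nat rat); apply: le_trans xm.
have ik i : (i < k)%N -> (i <= k.-1)%N by case: k {kx km}.
have -> : ('C(m, k))%:R = (\prod_(i < k) (m%:R - i%:R)) / (k`!)%:R :> rat.
  rewrite -[LHS](@mulfK _ (k`!)%:R) ?pnatr_eq0 -?lt0n ?fact_gt0 //; congr (_ / _).
  rewrite -natrM bin_ffact ffact_prod natr_prod; apply: eq_bigr => i _.
  by rewrite natrB // (leq_trans (ik _ (ltn_ord i))).
apply: ler_wpM2r; first by rewrite invr_ge0 ler0n.
apply: ler_prod => i _; rewrite lerD2r xm andbT subr_ge0.
by apply: le_trans kx; rewrite ler_nat ik.
Qed.

End ExtBinom.

Lemma card_le_by_fibres (T : finType) (f : T -> nat) (p q : nat) (A : {set T}) :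
  (forall B : {set T}, B \subset A -> {in B &, injective f} -> (#|B| <= p)%N) ->
  (forall i, (#|[set x in A | f x == i]| <= q)%N) ->
  (#|A| <= p * q)%N.
Proof.
elim: p A => [|p IH] A transversal fibre; have [->|[x xA]] := set_0Vmem A;
  rewrite ?cards0 //.
  have inj1 : {in [set x] &, injective f} by move=> z w /set1P -> /set1P ->.
  by have := transversal _ _ inj1; rewrite sub1set xA cards1 => /(_ isT).
pose B := [set z | f z == f x].
rewrite -(cardsID B A) mulSn leq_add //.
  by have -> : A :&: B = [set z in A | f z == f x] by apply/setP => z; rewrite !inE.
apply: IH => [B' B'A inj_B' | i]; last first.
  apply: leq_trans (fibre i); apply: subset_leq_card; apply/subsetP => z.
  by rewrite !inE => /andP [/andP [_ ->] ->].
have xB' : x \notin B' by apply/negP => /(subsetP B'A); rewrite !inE eqxx.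
suff : (#|x |: B'| <= p.+1)%N by rewrite cardsU1 xB' /= add1n ltnS.
apply: transversal.
  by rewrite subUset sub1set xA (subset_trans B'A) // subsetDl.
have fB' z : z \in B' -> f z != f x by move/(subsetP B'A); rewrite !inE => /andP [].
move=> z w /setU1P [-> | zB'] /setU1P [-> | wB'] //; last exact: inj_B'.
- by move=> fxw; have := fB' w wB'; rewrite fxw eqxx.
- by move=> fzx; have := fB' z zB'; rewrite fzx eqxx.
Qed.

Section Mirsky.
Variables (T : finType) (r : rel T).
Hypotheses (r_irr : irreflexive r) (r_trans : transitive r).

Lemma exists_maximal_above (S : {set T}) x : x \in S ->
  exists2 m, (m \in S) && ((m == x) || r x m) & {in S, forall z, ~~ r m z}.
Proof.
move=> xS.
pose up z := [set w in S | r z w].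
have xP : [pred z | (z \in S) && ((z == x) || r x z)] x by rewrite /= xS eqxx.
have [m mP m_min] := arg_minnP (fun z => #|up z|) xP.
exists m => // w wS; apply/negP => mw.
have wP : (w \in S) && ((w == x) || r x w).
  case/andP: mP => _ /orP [/eqP mx | xm]; first by rewrite wS -mx mw orbT.
  by rewrite wS (r_trans xm mw) orbT.
have : (#|up w| < #|up m|)%N.
  apply: proper_card; rewrite properEneq; apply/andP; split.
    by apply/eqP => /setP /(_ w); rewrite !inE wS mw r_irr.
  by apply/subsetP => v; rewrite !inE => /andP [-> /(r_trans mw)].
by rewrite ltnNge m_min.
Qed.

Lemma mirsky (m : nat) (S : {set T}) :
  (forall A : {set T}, A \subset S -> {in A &, forall x x', ~~ r x x'} -> (#|A| <= m)%N) ->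
  exists s, [/\ sorted r s, {subset s <= S} & (#|S| <= m * size s)%N].
Proof.
have [N] := ubnP #|S|; elim: N S => // N IH S ltSN antichain_le.
have [-> | [x0 x0S]] := set_0Vmem S; first by exists [::]; rewrite cards0.
pose M := [set z in S | [forall w in S, ~~ r z w]].
have MS : M \subset S by apply/subsetP => z; rewrite inE => /andP [].
have maximalM z : z \in M -> {in S, forall w, ~~ r z w}.
  by rewrite inE => /andP [_ /forall_inP].
have M_le : (#|M| <= m)%N.
  by apply: antichain_le => // z w zM /(subsetP MS); apply: maximalM.
have [m0 /andP [m0S _] m0max] := exists_maximal_above x0S.
have m0M : m0 \in M by rewrite inE m0S; apply/forall_inP.
have lt_SM : (#|S :\: M| < N)%N.
  suff : (#|S :\: M| < #|S|)%N by move: ltSN; lia.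
  rewrite cardsD (setIidPr MS) ltn_subrL.
  by apply/andP; split; apply/card_gt0P; [exists m0 | exists x0].
have [s [sorted_s sSM le_SM]] :=
  IH _ lt_SM (fun A AS => antichain_le A (subset_trans AS (subsetDl S M))).
have cardS : #|S| = (#|S :\: M| + #|M|)%N.
  by rewrite cardsD (setIidPr MS) subnK // subset_leq_card.
case: s sorted_s sSM le_SM => [|z p] sorted_s sSM le_SM.
  exists [:: m0]; split=> // [w /predU1P [-> //|//]|].
  by move: le_SM; rewrite cardS /= muln0 muln1 leqn0 => /eqP ->.
have /setDP [lastS lastM] : last z p \in S :\: M by apply: sSM; rewrite mem_last.
have [w /andP [wS /orP [/eqP wlast | lastw]] wmax] := exists_maximal_above lastS.
  by rewrite -wlast inE wS in lastM; case/negP: lastM; apply/forall_inP.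
have wM : w \in M by rewrite inE wS; apply/forall_inP.
exists (rcons (z :: p) w); split.
- by rewrite /= rcons_path lastw andbT.
- by move=> v; rewrite mem_rcons => /predU1P [-> | /sSM /setDP []]; [apply: (subsetP MS)|].
- by rewrite size_rcons mulnS cardS addnC leq_add.
Qed.

Lemma binomial_le_card_increasing (s : seq T) (k : nat) :
  sorted r s ->
  ('C(size s, k) <= #|[set f : {ffun 'I_k -> T} | [forall l, f l \in s] &&
      [forall l : 'I_k, forall l' : 'I_k, (l < l')%N ==> r (f l) (f l')]]|)%N.
Proof.
move=> sorted_s.
have inj_s : injective (tnth (in_tuple s)).
  by apply/tuple_uniqP; have := sorted_uniq r_trans r_irr sorted_s.
pose emb (t : k.-tuple 'I_(size s)) := [ffun l => tnth (in_tuple s) (tnth t l)].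
have inj_emb : injective emb.
  move=> t t' /ffunP e; apply: eq_from_tnth => l; apply: inj_s.
  by have := e l; rewrite !ffunE.
rewrite -card_ltn_sorted_tuples -(card_imset _ inj_emb); apply: subset_leq_card.
apply/subsetP => f /imsetP [t]; rewrite inE => sorted_t ->; rewrite inE.
apply/andP; split; apply/forallP => l; rewrite ?ffunE ?mem_tnth //.
apply/forallP => l'; apply/implyP => ll'; rewrite !ffunE.
have tll' : (tnth t l < tnth t l')%N.
  have := sorted_ltn_nth ltn_trans 0%N sorted_t l l'.
  rewrite !inE size_map size_tuple !ltn_ord => /(_ isT isT ll').
  by rewrite !(nth_map (tnth t l)) ?size_tuple // -!tnth_nth.
pose x0 := tnth (in_tuple s) (tnth t l).
rewrite !(tnth_nth x0 (in_tuple s)) /=.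
by apply: sorted_ltn_nth => //; rewrite inE ltn_ord.
Qed.

End Mirsky.

Definition precedes_at n (y : 'I_n) (C C' : {set {set 'I_n}}) : bool :=
  (chain_level C < chain_level C')%N &&
  (chain_min_cont C y \subset chain_min_cont C' y).

Lemma precedes_at_irr n (y : 'I_n) : irreflexive (precedes_at y).
Proof. by move=> C; rewrite /precedes_at ltnn. Qed.

Lemma precedes_at_trans n (y : 'I_n) : transitive (precedes_at y).
Proof.
move=> C2 C1 C3 /andP [lt12 sub12] /andP [lt23 sub23].
by rewrite /precedes_at (ltn_trans lt12 lt23) (subset_trans sub12 sub23).
Qed.

Section ChainsThrough.
Variables (n k : nat) (F : {set {set 'I_n}}) (admissible : nat -> Prop).
Variables (Gamma : nat -> {set {set {set 'I_n}}}) (G : {set {set {set 'I_n}}}).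
Variables (Y : {set {set 'I_n}} -> {set 'I_n}) (y : 'I_n).

Hypothesis cross_free : weakly_k_cross_free k F.
Hypothesis Gamma_chains : forall i C, admissible i -> C \in Gamma i ->
  [/\ C != set0, is_chain C & C \subset level F i].
Hypothesis Gamma_disjoint : forall i C C', admissible i ->
  C \in Gamma i -> C' \in Gamma i -> C != C' -> [disjoint C & C'].
Hypothesis Gamma_max_antichain : forall i C C', admissible i ->
  C \in Gamma i -> C' \in Gamma i ->
  chain_max C \subset chain_max C' -> chain_max C = chain_max C'.
Hypothesis memG : forall C, C \in G <-> exists i, admissible i /\ C \in Gamma i.
Hypothesis Y_sub_max : forall C, C \in G -> Y C \subset chain_max C.

Definition chains_through : {set {set {set 'I_n}}} := [set C in G | y \in Y C].
Local Notation D := chains_through.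

Lemma chain_level_Gamma i C : admissible i -> C \in Gamma i -> chain_level C = i.
Proof.
move=> adm_i CGi; have [C_ne chC CF] := Gamma_chains adm_i CGi.
exact/level_ofE/(subsetP CF)/(chain_max_mem chC C_ne).
Qed.

Lemma chains_through_Gamma C : C \in D ->
  admissible (chain_level C) /\ C \in Gamma (chain_level C).
Proof.
rewrite inE => /andP [/memG [i [adm_i CGi]] _].
by rewrite (chain_level_Gamma adm_i CGi).
Qed.

Lemma chains_through_level C X : C \in D -> X \in C -> X \in level F (chain_level C).
Proof.
by case/chains_through_Gamma => adm CG; have [_ _ /subsetP] := Gamma_chains adm CG; apply.
Qed.

Lemma chains_through_max C : C \in D -> chain_max C \in C /\ y \in chain_max C.
Proof.
move=> CD; have [adm CG] := chains_through_Gamma CD.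
have [C_ne chC _] := Gamma_chains adm CG.
case/setIdP: CD => CG' yY; split; first exact: chain_max_mem chC C_ne.
exact: subsetP (Y_sub_max CG') _ yY.
Qed.

Lemma chains_through_min_cont C : C \in D ->
  chain_min_cont C y \in C /\ y \in chain_min_cont C y.
Proof.
move=> CD; have [adm CG] := chains_through_Gamma CD.
have [_ chC _] := Gamma_chains adm CG.
exact: chain_min_cont_mem chC (chains_through_max CD).2.
Qed.

Lemma same_level_chains_lt (A : {set {set {set 'I_n}}}) : A \subset D ->
  {in A &, forall C C', chain_level C = chain_level C'} -> (#|A| < k)%N.
Proof.
move=> AD same_lvl.
apply: (weakly_cross_free_antichain (y := y) (f := @chain_max n) (A := A) cross_free).
  move=> C /(subsetP AD) CD; have [maxC ymax] := chains_through_max CD.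
  by have /mem_levelP [] := chains_through_level CD maxC.
move=> C C' CA C'A neCC'; apply/negP => maxCC'.
have CD := subsetP AD C CA; have C'D := subsetP AD C' C'A.
have [adm CG] := chains_through_Gamma CD; have [_ C'G] := chains_through_Gamma C'D.
rewrite -(same_lvl C C') // in C'G.
have max_eq := Gamma_max_antichain adm CG C'G maxCC'.
have := disjoint_setI0 (Gamma_disjoint adm CG C'G neCC').
move/setP/(_ (chain_max C)); rewrite !inE (chains_through_max CD).1 max_eq.
by rewrite (chains_through_max C'D).1.
Qed.

Lemma distinct_level_antichain_lt (B : {set {set {set 'I_n}}}) : B \subset D ->
  {in B &, forall C C', ~~ precedes_at y C C'} ->
  {in B &, injective (@chain_level n)} -> (#|B| < k)%N.
Proof.
move=> BD antichain inj_lvl.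
apply: (weakly_cross_free_antichain (y := y) (f := fun C => chain_min_cont C y) (A := B)
  cross_free).
  move=> C /(subsetP BD) CD; have [minC ymin] := chains_through_min_cont CD.
  by have /mem_levelP [] := chains_through_level CD minC.
move=> C C' CB C'B neCC'; apply/negP => minCC'.
have CD := subsetP BD C CB; have C'D := subsetP BD C' C'B.
have minC := chains_through_level CD (chains_through_min_cont CD).1.
have minC' := chains_through_level C'D (chains_through_min_cont C'D).1.
case: (ltngtP (chain_level C) (chain_level C')) => [lvl_lt | lvl_gt | lvl_eq].
- by have := antichain C C' CB C'B; rewrite /precedes_at lvl_lt minCC'.
- by have := level_card_lt minC minC' lvl_gt; rewrite ltnNge subset_leq_card.
- by move: neCC'; rewrite (inj_lvl C C' CB C'B lvl_eq) eqxx.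
Qed.

Lemma antichain_chains_through_le (A : {set {set {set 'I_n}}}) : (0 < k)%N ->
  A \subset D -> {in A &, forall C C', ~~ precedes_at y C C'} ->
  (#|A| <= k.-1 ^ 2)%N.
Proof.
move=> k_gt0 AD antichain; rewrite expnS expn1.
have lt_k m : (m < k)%N -> (m <= k.-1)%N by case: k k_gt0.
apply: (card_le_by_fibres (f := @chain_level n)) => [B BA inj_lvl | i].
  apply/lt_k/distinct_level_antichain_lt; first exact: subset_trans BA AD.
    by move=> C C' /(subsetP BA) CA /(subsetP BA); apply: antichain.
  exact: inj_lvl.
apply/lt_k/same_level_chains_lt.
  by apply/subsetP => C; rewrite inE => /andP [/(subsetP AD)].
by move=> C C'; rewrite !inE => /andP [_ /eqP ->] /andP [_ /eqP ->].
Qed.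

End ChainsThrough.

Unset Implicit Arguments.
Theorem claim3 (n k : nat) (F : {set {set 'I_n}}) (a b : R)
  (Gamma : nat -> {set {set {set 'I_n}}})
  (Y : {set {set 'I_n}} -> {set 'I_n}) :
  (2 <= k)%N ->
  weakly_k_cross_free k F ->
  Rle R0 a -> Rle a b -> Rle b (Rdiv (ln (INR n)) (ln (INR 2))) ->
  (forall i : nat, Rlt a (INR i) -> Rle (INR i) b ->
     (forall C, C \in Gamma i ->
        [/\ C != set0, is_chain C & C \subset level F i]) /\
     (forall C C', C \in Gamma i -> C' \in Gamma i -> C != C' ->
        [disjoint C & C']) /\
     (forall C C', C \in Gamma i -> C' \in Gamma i ->
        chain_max C \subset chain_max C' -> chain_max C = chain_max C')) ->
  let Gab : {set {set {set 'I_n}}} :=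
    [set C | pbool (exists i : nat,
                      [/\ Rlt a (INR i), Rle (INR i) b & C \in Gamma i])] in
  (forall C, C \in Gab -> Y_of_chain C (Y C)) ->
  let d (y : 'I_n) : nat := #|[set C in Gab | y \in Y C]| in
  let good (y : 'I_n) (t : {ffun 'I_k -> {set {set 'I_n}}}) : Prop :=
    (exists j : 'I_k -> nat,
        (forall l l' : 'I_k, (l < l')%N -> (j l < j l')%N) /\
        (forall l, [/\ Rlt a (INR (j l)), Rle (INR (j l)) b
                     & t l \in Gamma (j l)])) /\
    (forall l, y \in Y (t l)) /\
    (forall l l' : 'I_k, (l <= l')%N ->
        chain_min_cont (t l) y \subset chain_min_cont (t l') y) in
  let g (y : 'I_n) : nat := #|[set t | pbool (good y t)]| in
  forall y : 'I_n,
    (ext_binom ((d y)%:R / ((k.-1) ^ 2)%:R) k <= (g y)%:R)%R.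
Proof.
move=> k_ge2 crossF _ _ _ hGamma Gab hY d good g y.
pose admissible i := Rlt a (INR i) /\ Rle (INR i) b.
have memG C : C \in Gab <-> exists i, admissible i /\ C \in Gamma i.
  rewrite inE; split => [/pboolP [i [lo hi CG]] | [i [[lo hi] CG]]]; first by exists i.
  by apply/pboolP; exists i.
have Gamma_chains i C (adm : admissible i) := (hGamma i adm.1 adm.2).1 C.
have Gamma_disjoint i C C' (adm : admissible i) := (hGamma i adm.1 adm.2).2.1 C C'.
have Gamma_max_antichain i C C' (adm : admissible i) := (hGamma i adm.1 adm.2).2.2 C C'.
have Y_sub_max C (CG : C \in Gab) : Y C \subset chain_max C := (hY C CG).1.
have k_gt0 : (0 < k)%N by apply: leq_trans k_ge2.
have [s [sorted_s sD le_Ds]] : exists s, [/\ sorted (precedes_at y) s,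
    {subset s <= chains_through Gab Y y} &
    (#|chains_through Gab Y y| <= k.-1 ^ 2 * size s)%N].
  apply: (mirsky (@precedes_at_irr _ y) (@precedes_at_trans _ y)) => A.
  exact: (antichain_chains_through_le crossF Gamma_chains Gamma_disjoint
    Gamma_max_antichain memG Y_sub_max k_gt0).
have d_le : ((d y)%:R / ((k.-1) ^ 2)%:R <= (size s)%:R :> rat)%R.
  have k1_gt0 : (0 < k.-1)%N by rewrite -ltnS prednK.
  by rewrite ler_pdivrMr ?ltr0n ?expn_gt0 ?k1_gt0 // -natrM ler_nat mulnC.
apply: le_trans (ext_binom_le_binomial k d_le) _.
rewrite ler_nat; apply: leq_trans (binomial_le_card_increasing
  (@precedes_at_irr _ y) (@precedes_at_trans _ y) k sorted_s) _.
apply: subset_leq_card; apply/subsetP => f.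
rewrite !inE => /andP [/forallP f_in_s /forallP f_incr].
have fD l : f l \in chains_through Gab Y y := sD _ (f_in_s l).
have f_prec (l l' : 'I_k) : (l < l')%N -> precedes_at y (f l) (f l').
  by move=> ll'; have /forallP/(_ l')/implyP/(_ ll') := f_incr l.
apply/pboolP; split; [|split].
- exists (fun l => chain_level (f l)); split=> [l l' /f_prec /andP [] // | l].
  by have [[lo hi] CG] := chains_through_Gamma Gamma_chains memG (fD l).
- by move=> l; have /setIdP [] := fD l.
- move=> l l'; rewrite leq_eqVlt => /orP [/eqP/val_inj -> // | /f_prec /andP []] //.
Qed.
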